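(* Let $N_1,N_2\ge1$ and $m_1\ge1$, $m_2\ge1$ be integers with $m_1+m_2<N_1N_2$. Let $A=A(N_1,N_2,m_1,m_2)$ be the set of $N_1\times N_2$ matrices $X=(x_{ij})$, $i\in\mathbb{Z}/N_1\mathbb{Z}$, $j\in\mathbb{Z}/N_2\mathbb{Z}$, having exactly $m_1$ entries equal to $1$, exactly $m_2$ entries equal to $2$, and all other entries equal to $0$. Define the unary operation $f:A\to A$ by $f(X)=Y(U(X))$, where: (i) $U(X)=(u_{ij})$ is obtained from $X$ by moving every entry $1$ one position to the right cyclically whenever the position to its right is $0$: namely $u_{ij}=1$ if ($x_{ij}=1$ and $x_{i,j+1}\neq 0$) or ($x_{ij}=0$ and $x_{i,j-1}=1$); $u_{ij}=2$ if $x_{ij}=2$; and $u_{ij}=0$ otherwise (indices $j\pm1$ modulo $N_2$); (ii) $Y(U)=(y_{ij})$ is obtained from $U$ by moving every entry $2$ from position $(i,j)$ to position $(i+1,j)$ (modulo $N_1$) whenever $u_{i+1,j}=0$: namely $y_{ij}=2$ if ($u_{ij}=2$ and $u_{i+1,j}\neq0$) or ($u_{ij}=0$ and $u_{i-1,j}=2$); $y_{ij}=1$ if $u_{ij}=1$; and $y_{ij}=0$ otherwise. Let $B\subseteq A$ be the set of matrices $X$ such that every entry $1$ of $X$ has a $0$ immediately to its right in $X$ (i.e. $x_{ij}=1\Rightarrow x_{i,j+1}=0$) and every entry $2$ of $U(X)$ has a $0$ at the next row position in $U(X)$ (i.e. $u_{ij}=2\Rightarrow u_{i+1,j}=0$).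 Let $f^1=f$, $f^t=f\circ f^{t-1}$, and let $C\subseteq A$ be the set of matrices $X$ for which there exists $t_0$ such that $f^t(X)\in B$ for all $t\ge t_0$. If the greatest common divisor of $N_1$ and $N_2$ is less than $3$, then no matrix belongs to $C$ (i.e. $C=\emptyset$).
   Context: Interpretation: $X\in A$ encodes a state of a deterministic Biham--Middleton--Levine type traffic system on an $N_1\times N_2$ torus, with $1$ = particle of the first type (moving along rows), $2$ = particle of the second type (moving along columns), $0$ = vacant cell; $f$ is one time step (first-type particles move, then second-type particles move); $B$ is the set of states in which every particle moves; $C$ is the set of states that eventually stay in free movement forever. *)

From mathcomp Require Import all_boot.
Set Implicit Arguments. Unset Strict Implicit. Unset Printing Implicit Defensive.

(* A state is an N1 x N2 grid of nats, rows indexed by 'I_N1 (= Z/N1Z),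
   columns by 'I_N2 (= Z/N2Z); cyclic successor/predecessor are ordS / ord_pred. *)
Definition grid (N1 N2 : nat) := 'I_N1 -> 'I_N2 -> nat.

Section BML.
Variables (N1 N2 m1 m2 : nat).

Definition count_val (X : grid N1 N2) (v : nat) : nat :=
  #|[set ij : 'I_N1 * 'I_N2 | X ij.1 ij.2 == v]|.

Definition inA (X : grid N1 N2) : Prop :=
  [/\ forall i j, X i j \in [:: 0; 1; 2],
      count_val X 1 = m1 & count_val X 2 = m2].

Definition Ustep (X : grid N1 N2) : grid N1 N2 := fun i j =>
  if ((X i j == 1) && (X i (ordS j) != 0)) || ((X i j == 0) && (X i (ord_pred j) == 1))
  then 1
  else if X i j == 2 then 2 else 0.

Definition Ystep (U : grid N1 N2) : grid N1 N2 := fun i j =>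
  if ((U i j == 2) && (U (ordS i) j != 0)) || ((U i j == 0) && (U (ord_pred i) j == 2))
  then 2
  else if U i j == 1 then 1 else 0.

Definition fstep (X : grid N1 N2) : grid N1 N2 := Ystep (Ustep X).

Definition inB (X : grid N1 N2) : Prop :=
  [/\ inA X,
      (forall i j, X i j = 1 -> X i (ordS j) = 0) &
      (forall i j, Ustep X i j = 2 -> Ustep X (ordS i) j = 0)].

Definition inC (X : grid N1 N2) : Prop :=
  inA X /\ exists t0 : nat, forall t, t0 <= t -> inB (iter t fstep X).

End BML.

(* From time t0 on, every 1 moves one column to the right and every 2 one row
   down at each step, so a 1 starting at (a, b) and a 2 starting at (c, d) are
   at (a, b + s) and (c + s, d) at time t0 + s.  Since gcd(N1, N2) <= 2, the
   Chinese remainder theorem yields a time s at which either the 2 sits just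
   right of the 1, or it sits just above the cell the 1 moves into; in both
   cases one of the two particles is blocked, contradicting free flow. *)
From mathcomp Require Import all_boot zify ring.
Set Implicit Arguments. Unset Strict Implicit. Unset Printing Implicit Defensive.

Lemma chinese_gcd n1 n2 x y : 0 < n1 -> 0 < n2 ->
  x = y %[mod gcdn n1 n2] -> exists s, s = x %[mod n1] /\ s = y %[mod n2].
Proof.
move=> n1_gt0 n2_gt0 xy_mod; set g := gcdn n1 n2 in xy_mod.
case: (egcdnP n2 n1_gt0) => km kn def_g _; rewrite -/g in def_g.
have xn2 : x + x * n2.-1 = x * n2 by rewrite addnC -mulnSr prednK.
have g_dvd : g %| y + x * n2.-1.
  rewrite /dvdn -modnDml -xy_mod modnDml xn2.
  by rewrite -(modn_dvdm _ (dvdn_gcdr n1 n2)) modnMl mod0n.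
(* [km * n1 = g] and [e * g = y - x] modulo [n2]. *)
set e := (y + x * n2.-1) %/ g.
exists (x + e * (km * n1)); split; first by rewrite addnC mulnA modnMDl.
have -> : x + e * (km * n1) = y + (x + e * kn) * n2.
  by rewrite def_g mulnDr (divnK g_dvd) mulnDl -xn2; ring.
by rewrite addnC modnMDl.
Qed.

Lemma chinese_gcd_shift n1 n2 i1 j1 i2 j2 : 0 < n1 -> 0 < n2 ->
  j1 <= n1 -> j2 <= n2 -> i1 + j2 = i2 + j1 %[mod gcdn n1 n2] ->
  exists s, j1 + s = i1 %[mod n1] /\ j2 + s = i2 %[mod n2].
Proof.
move=> n1_gt0 n2_gt0 le_j1 le_j2 ij_mod.
have g_n1 : n1 %% gcdn n1 n2 = 0 by apply/eqP; apply: dvdn_gcdl.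
have g_n2 : n2 %% gcdn n1 n2 = 0 by apply/eqP; apply: dvdn_gcdr.
have [|s [s1 s2]] :=
  @chinese_gcd n1 n2 (i1 + (n1 - j1)) (i2 + (n2 - j2)) n1_gt0 n2_gt0.
  apply/eqP; rewrite -(eqn_modDr (j1 + j2)).
  have -> : i1 + (n1 - j1) + (j1 + j2) = n1 + (i1 + j2) by lia.
  have -> : i2 + (n2 - j2) + (j1 + j2) = n2 + (i2 + j1) by lia.
  by rewrite -(modnDml n1) g_n1 -(modnDml n2) g_n2 !add0n ij_mod.
exists s; split.
  by rewrite -modnDmr s1 modnDmr addnCA subnKC // modnDr.
by rewrite -modnDmr s2 modnDmr addnCA subnKC // modnDr.
Qed.

Lemma eq_mod_or_succ g u v : 0 < g <= 2 -> u = v %[mod g] \/ u = v.+1 %[mod g].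
Proof.
case: g => [|[|[|]]] //= _; first by rewrite !modn1; left.
by rewrite !modn2 /=; case: (odd u); case: (odd v); auto.
Qed.

Lemma iter_ordS_val n (j : 'I_n) s : val (iter s (@ordS n) j) = (j + s) %% n.
Proof.
elim: s => [|s IH] /=; first by rewrite addn0 modn_small.
by rewrite IH addnS -addn1 modnDml addn1.
Qed.

Lemma iter_ordS_mod n (i j : 'I_n) s :
  j + s = i %[mod n] -> iter s (@ordS n) j = i.
Proof.
by move=> ji_mod; apply: val_inj; rewrite /= iter_ordS_val ji_mod modn_small.
Qed.

Section FreeFlow.
Variables (N1 N2 m1 m2 : nat).
Implicit Types (Z U : grid N1 N2).

Lemma count_val_gt0_witness Z v : 0 < count_val Z v -> exists i j, Z i j = v.
Proof. by rewrite card_gt0 => /set0Pn [[i j]]; rewrite inE => /eqP; exists i, j. Qed.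

Lemma Ustep_keeps2 Z i j : Z i j = 2 -> Ustep Z i j = 2.
Proof. by move=> Zij; rewrite /Ustep Zij. Qed.

Lemma Ustep_moves1 Z i j : Z i j = 1 -> Z i (ordS j) = 0 -> Ustep Z i (ordS j) = 1.
Proof. by move=> Zij Zij'; rewrite /Ustep Zij' ordSK Zij. Qed.

Lemma Ystep_keeps1 U i j : U i j = 1 -> Ystep U i j = 1.
Proof. by move=> Uij; rewrite /Ystep Uij. Qed.

Lemma Ystep_moves2 U i j : U i j = 2 -> U (ordS i) j = 0 -> Ystep U (ordS i) j = 2.
Proof. by move=> Uij Ui'j; rewrite /Ystep Ui'j ordSK Uij. Qed.

Lemma fstep_moves1 Z i j : inB m1 m2 Z -> Z i j = 1 -> fstep Z i (ordS j) = 1.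
Proof. by case=> _ free1 _ Zij; apply/Ystep_keeps1/Ustep_moves1/free1. Qed.

Lemma fstep_moves2 Z i j : inB m1 m2 Z -> Z i j = 2 -> fstep Z (ordS i) j = 2.
Proof.
case=> _ _ free2 /Ustep_keeps2 Uij.
by apply: Ystep_moves2 => //; apply: free2.
Qed.

Lemma inB_row_unblocked Z i j : inB m1 m2 Z -> Z i j = 1 -> Z i (ordS j) <> 2.
Proof. by case=> _ free1 _ /free1 ->. Qed.

Lemma inB_col_unblocked Z i j :
  inB m1 m2 Z -> Z (ordS i) j = 1 -> Z i (ordS j) <> 2.
Proof.
case=> _ free1 free2 Zi'j /Ustep_keeps2 /free2.
by rewrite (Ustep_moves1 Zi'j) ?free1.
Qed.

Variable Z : grid N1 N2.
Hypothesis freeZ : forall s, inB m1 m2 (iter s (@fstep N1 N2) Z).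

Lemma free_path1 a b s :
  Z a b = 1 -> iter s (@fstep N1 N2) Z a (iter s (@ordS _) b) = 1.
Proof. by move=> Zab; elim: s => //= s; apply: fstep_moves1. Qed.

Lemma free_path2 c d s :
  Z c d = 2 -> iter s (@fstep N1 N2) Z (iter s (@ordS _) c) d = 2.
Proof. by move=> Zcd; elim: s => //= s; apply: fstep_moves2. Qed.

End FreeFlow.

Theorem theorem2 (N1 N2 m1 m2 : nat) :
  1 <= N1 -> 1 <= N2 -> 1 <= m1 -> 1 <= m2 -> m1 + m2 < N1 * N2 ->
  gcdn N1 N2 < 3 ->
  forall X : grid N1 N2, ~ inC m1 m2 X.
Proof.
move=> N1_gt0 N2_gt0 m1_gt0 m2_gt0 _ small_gcd X [_ [t0 freeX]].
set Z := iter t0 (@fstep N1 N2) X.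
have freeZ s : inB m1 m2 (iter s (@fstep N1 N2) Z).
  by rewrite /Z -iterD; apply: freeX; rewrite leq_addl.
have [[_ count1 count2] _ _] := freeZ 0.
have [a [b Zab]] : exists a b, Z a b = 1.
  by apply: (count_val_gt0_witness (v := 1)); rewrite count1.
have [c [d Zcd]] : exists c d, Z c d = 2.
  by apply: (count_val_gt0_witness (v := 2)); rewrite count2.
have gcd_le2 : 0 < gcdn N1 N2 <= 2 by rewrite gcdn_gt0 N1_gt0.
have [ac_mod | ac_mod] := eq_mod_or_succ (a + b.+1) (d + c) gcd_le2.
- have [s [cs bs]] :=
    chinese_gcd_shift N1_gt0 N2_gt0 (ltnW (ltn_ord c)) (ltn_ord b) ac_mod.
  have next_b : ordS (iter s (@ordS _) b) = d.
    by apply: (iter_ordS_mod (s := s.+1)); rewrite -addSnnS.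
  apply: (inB_row_unblocked (freeZ s) (free_path1 freeZ s Zab)).
  by rewrite next_b -(iter_ordS_mod cs) (free_path2 freeZ s Zcd).
- rewrite -addnS in ac_mod.
  have [s [cs bs]] := chinese_gcd_shift N1_gt0 N2_gt0 (ltn_ord c) (ltn_ord b) ac_mod.
  have next_c : ordS (iter s (@ordS _) c) = a.
    by apply: (iter_ordS_mod (s := s.+1)); rewrite -addSnnS.
  have next_b : ordS (iter s (@ordS _) b) = d.
    by apply: (iter_ordS_mod (s := s.+1)); rewrite -addSnnS.
  apply: (inB_col_unblocked (freeZ s) (i := iter s (@ordS _) c)
                                      (j := iter s (@ordS _) b)).
    by rewrite next_c (free_path1 freeZ s Zab).
  by rewrite next_b (free_path2 freeZ s Zcd).
Qed.
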